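(* Let \(\mathcal{G}=\langle x,y,t \mid x^7, y^2, (xy)^3, [x,y]^4, t^2, [t^{x^2},yx^{-1}], [t,y], (yt^{x^2})^5, (xyx^2t^x)^5, (xt)^8\rangle\). Then \(|\mathcal{G}|\ge 443{,}520\).
   Context: Conventions: \(a^g=g^{-1}ag\) and \([a,b]=a^{-1}b^{-1}ab\). *)

From mathcomp Require Import all_boot.
Set Implicit Arguments. Unset Strict Implicit. Unset Printing Implicit Defensive.

Record group := Group {
  carrier :> Type;
  gmul : carrier -> carrier -> carrier;
  gone : carrier;
  ginv : carrier -> carrier;
  gmulA : forall a b c, gmul a (gmul b c) = gmul (gmul a b) c;
  gmul1 : forall a, gmul gone a = a;
  gmulV : forall a, gmul (ginv a) a = gone
}.

Section Ops.
Variable G : group.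
Fixpoint gpow (a : G) (n : nat) : G :=
  match n with O => gone G | S k => gmul a (gpow a k) end.
Definition gconj (a g : G) : G := gmul (gmul (ginv g) a) g.
Definition gcomm (a b : G) : G :=
  gmul (gmul (gmul (ginv a) (ginv b)) a) b.

Definition rels (x y t : G) : Prop :=
  gpow x 7 = gone G /\ gpow y 2 = gone G /\ gpow (gmul x y) 3 = gone G /\
  gpow (gcomm x y) 4 = gone G /\ gpow t 2 = gone G /\
  gcomm (gconj t (gpow x 2)) (gmul y (ginv x)) = gone G /\
  gcomm t y = gone G /\
  gpow (gmul y (gconj t (gpow x 2))) 5 = gone G /\
  gpow (gmul (gmul (gmul x y) (gpow x 2)) (gconj t x)) 5 = gone G /\
  gpow (gmul x t) 8 = gone G.
End Ops.

Definition is_hom (G H : group) (f : G -> H) : Prop :=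
  forall a b, f (gmul a b) = gmul (f a) (f b).

(* (G; x, y, t) is the group presented by < x, y, t | rels >, characterized
   by its universal property: the relations hold, and every triple satisfying
   the relations in any group H is the image of (x,y,t) under a unique
   homomorphism G -> H. *)
Definition is_presented (G : group) (x y t : G) : Prop :=
  rels x y t /\
  forall (H : group) (a b c : H), rels a b c ->
    exists f : G -> H, [/\ is_hom f, f x = a, f y = b, f t = c &
      forall g : G -> H, is_hom g -> g x = a -> g y = b -> g t = c ->
        forall z, g z = f z].

From mathcomp Require Import all_boot fingroup perm.
Set Implicit Arguments. Unset Strict Implicit. Unset Printing Implicit Defensive.

(* Sending x, y, t to the three permutations of 22 points in gen_table
   respects the ten relations (they generate M22, of order 443520), so the
   presented group maps onto a permutation group.  A stabilizer chain for the
   points 0, 1, 2 gives 48 * 20 * 21 * 22 = 443520 words with distinct images: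
   in a product s3 s2 s1 s0, where s_m (m < 3) fixes 0, ..., m-1 and ranges
   over words sending m to pairwise distinct points, and s3 ranges over 48
   words with distinct images fixing 0, 1, 2, the image of 0 determines s0,
   then the image of 1 determines s1, and so on. *)

Lemma hom_one (G H : group) (f : G -> H) : is_hom f -> f (gone G) = gone H.
Proof.
move=> fM; have f1_idem : f (gone G) = gmul (f (gone G)) (f (gone G)).
  by rewrite -fM gmul1.
by rewrite -(gmulV (f (gone G))) {3}f1_idem gmulA gmulV gmul1.
Qed.

Definition word_eval (G : group) (gen : nat -> G) (w : seq nat) : G :=
  foldr (fun g p => gmul (gen g) p) (gone G) w.

Lemma hom_word_eval (G H : group) (f : G -> H) (genG : nat -> G) (genH : nat -> H) :
  is_hom f -> (forall g, f (genG g) = genH g) ->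
  forall w, f (word_eval genG w) = word_eval genH w.
Proof.
move=> fM fgen; elim=> [|g w IHw] /=; first exact: hom_one.
by rewrite fM fgen IHw.
Qed.

Definition gmul_fam (G : group) (A B : Type) (S : A -> G) (U : B -> G) (ab : A * B) : G :=
  gmul (S ab.1) (U ab.2).

Definition word_family (G : group) (gen : nat -> G) (ws : seq (seq nat)) (i : 'I_(size ws)) : G :=
  word_eval gen (nth [::] ws i).
Arguments word_family {G} gen ws i.

Lemma injective_ord_of_card (T : finType) (X : Type) (F : T -> X) n :
  #|T| = n -> injective F -> exists f : 'I_n -> X, injective f.
Proof.
move=> cardT injF; exists (F \o enum_val \o cast_ord (esym cardT)).
apply: inj_comp; first exact: inj_comp injF enum_val_inj.
exact: cast_ord_inj.
Qed.

Lemma uniq_map_nth_inj (T : eqType) (X : Type) (x0 : X) (s : seq X) (g : X -> T) :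
  uniq (map g s) -> injective (fun i : 'I_(size s) => g (nth x0 s i)).
Proof.
move=> uniq_gs i j gij; apply/val_inj/eqP.
rewrite -(nth_uniq (g x0) _ _ uniq_gs) ?size_map ?ltn_ord //.
by rewrite !(nth_map x0) ?ltn_ord // gij.
Qed.

Lemma eq_on_iota (f h : nat -> nat) n :
  all (fun k => f k == h k) (iota 0 n) -> forall k, k < n -> f k = h k.
Proof. by move=> /allP fh k lt_kn; apply/eqP/fh; rewrite mem_iota. Qed.

Definition perm_group (T : finType) : group :=
  @Group {perm T} *%g 1%g (fun p => p^-1)%g (@mulgA _) (@mul1g _) (@mulVg _).

Lemma mul_stab_transversal_inj (T : finType) (A B : Type) (k : T)
    (S : A -> {perm T}) (U : B -> {perm T}) :
  injective S -> (forall a, S a k = k) -> injective (fun b => U b k) ->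
  injective (gmul_fam (G := perm_group T) S U).
Proof.
move=> injS Sk injUk [a b] [a' b']; rewrite /gmul_fam /= => E.
have eq_b : b = b'.
  by apply: injUk; have := congr1 (fun p : {perm T} => p k) E; rewrite /= !permM !Sk.
by rewrite -eq_b in E *; move/mulIg/injS: E => ->.
Qed.

Lemma gmul_fam_fix (T : finType) (A B : Type) (k : T) (S : A -> {perm T}) (U : B -> {perm T}) :
  (forall a, S a k = k) -> (forall b, U b k = k) ->
  forall ab, gmul_fam (G := perm_group T) S U ab k = k.
Proof. by move=> Sk Uk ab; rewrite /gmul_fam /= permM Sk Uk. Qed.

Lemma perm_eq_points n (p q : {perm 'I_n}) :
  (forall k (lt_kn : k < n), val (p (Ordinal lt_kn)) = val (q (Ordinal lt_kn))) -> p = q.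
Proof. by move=> pq; apply/permP => -[k lt_kn]; apply/val_inj/pq. Qed.

Definition is_table n (s : seq nat) := [&& size s == n, all (fun k => k < n) s & uniq s].

Definition table_fun n (s : seq nat) (i : 'I_n) : 'I_n := insubd i (nth 0 s i).

Lemma table_funE n s (i : 'I_n) : is_table n s -> val (table_fun s i) = nth 0 s i.
Proof.
case/and3P=> /eqP size_s /allP lt_s _; rewrite val_insubd lt_s //.
by rewrite mem_nth // size_s.
Qed.

Lemma table_fun_inj n s : is_table n s -> injective (@table_fun n s).
Proof.
move=> tab_s i j /(congr1 val); rewrite !table_funE //.
case/and3P: tab_s => /eqP size_s _ uniq_s ij; apply/val_inj/eqP.
by rewrite -(nth_uniq 0 _ _ uniq_s) ?size_s ?ltn_ord // ij.
Qed.

Definition table_perm n s (tab_s : is_table n s) : {perm 'I_n} := perm (table_fun_inj tab_s).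

Lemma table_permE n s (tab_s : is_table n s) i : val (table_perm tab_s i) = nth 0 s i.
Proof. by rewrite permE table_funE. Qed.

(* Letter 0, 1, 2 stands for x, y, t; entry k of a table is the image of point k. *)
Definition gen_table (g : nat) : seq nat :=
  match g with
  | 0 => [:: 10; 6; 8; 4; 19; 9; 16; 11; 1; 2; 20; 3; 13; 7; 14; 18; 5; 15; 0; 12; 21; 17]
  | 1 => [:: 0; 1; 9; 11; 19; 5; 6; 12; 16; 2; 15; 3; 7; 14; 13; 10; 8; 21; 18; 4; 20; 17]
  | _ => [:: 0; 1; 7; 8; 17; 5; 6; 2; 3; 12; 13; 16; 9; 10; 15; 14; 11; 4; 18; 21; 20; 19]
  end.

Definition act (g k : nat) : nat := nth 0 (gen_table g) k.
Arguments act : simpl never.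

Definition act_word (w : seq nat) (k : nat) : nat := foldl (fun k g => act g k) k w.

Lemma gen_table_ok g : is_table 22 (gen_table g).
Proof. by case: g => [|[|g]]. Qed.

Definition gen_perm (g : nat) : {perm 'I_22} :=
  match g with
  | 0 => table_perm (gen_table_ok 0)
  | 1 => table_perm (gen_table_ok 1)
  | _ => table_perm (gen_table_ok 2)
  end.
Arguments gen_perm : simpl never.

Lemma gen_permE g i : val (gen_perm g i) = act g (val i).
Proof. by case: g => [|[|g]]; rewrite table_permE. Qed.

Definition word_perm : seq nat -> {perm 'I_22} := word_eval (G := perm_group _) gen_perm.

Lemma word_permE w i : val (word_perm w i) = act_word w (val i).
Proof. by elim: w i => [|g w IHw] i /=; rewrite ?perm1 // permM IHw gen_permE. Qed.

Ltac perm_eq_by_points :=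
  apply: perm_eq_points; intros ?k ?lt_k22; rewrite ?permM ?perm1 ?gen_permE /=;
  revert k lt_k22; apply: eq_on_iota; vm_compute; reflexivity.

Local Open Scope group_scope.

Lemma gen_perm_invE :
  [/\ (gen_perm 0)^-1 = gen_perm 0 * gen_perm 0 * gen_perm 0 * gen_perm 0 * gen_perm 0 * gen_perm 0,
      (gen_perm 1)^-1 = gen_perm 1 & (gen_perm 2)^-1 = gen_perm 2].
Proof. by split; apply/eqP; rewrite eq_invg_mul; apply/eqP; perm_eq_by_points. Qed.

Lemma gen_perm_rels : rels (G := perm_group _) (gen_perm 0) (gen_perm 1) (gen_perm 2).
Proof.
have [inv0 inv1 inv2] := gen_perm_invE.
rewrite /rels /gconj /gcomm /= ?mulg1 ?invMg ?invgK ?invg1 inv0 inv1 inv2 ?mulg1 ?mul1g.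
by repeat split; perm_eq_by_points.
Qed.

Local Close Scope group_scope.

Definition transversal0 : seq (seq nat) :=
  [:: [::];
  [:: 0; 2; 0; 2; 0; 0];
  [:: 0; 2; 0; 2];
  [:: 0; 2; 0; 0; 0];
  [:: 0; 0; 0; 0; 2];
  [:: 0; 2; 0; 0; 2; 0];
  [:: 0; 2; 0; 2; 0; 0; 0];
  [:: 0; 2; 0];
  [:: 0; 2; 0; 2; 0];
  [:: 0; 2; 0; 1; 2];
  [:: 0];
  [:: 0; 2; 0; 0];
  [:: 0; 2; 0; 1];
  [:: 0; 2];
  [:: 0; 1; 2];
  [:: 0; 1];
  [:: 0; 2; 0; 0; 2];
  [:: 0; 0; 0; 0];
  [:: 0; 1; 0];
  [:: 0; 0; 0; 2];
  [:: 0; 0];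
  [:: 0; 0; 0]].
Definition transversal1 : seq (seq nat) :=
  [:: [::];
  [:: 0; 1; 0; 0; 0; 0; 0; 1; 0; 0; 0];
  [:: 0; 0; 0; 1; 0; 0; 0; 2];
  [:: 0; 2; 0; 0; 0; 0; 2; 0; 0; 0];
  [:: 0; 1; 0; 0];
  [:: 0; 0; 2; 0; 0; 0; 0; 0; 0; 2; 0; 0; 2; 0; 0; 2; 1; 0; 0; 0; 0; 0; 0; 2; 0; 0; 0; 0; 0; 0];
  [:: 0; 2; 0; 2; 0; 0; 0; 0; 2; 0; 0; 0; 0; 0; 2; 0; 0; 0; 0; 0; 0];
  [:: 0; 0; 0; 1; 0; 0; 0];
  [:: 0; 0; 1; 0; 0; 0; 0; 0];
  [:: 0; 2; 0; 0; 0; 2; 0; 0; 0; 0; 0; 0; 2; 0; 0; 0; 0; 0; 0; 2; 0; 0; 0; 0; 0; 0];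
  [:: 0; 1; 2; 0; 2; 1; 0; 0; 0; 0; 0; 0];
  [:: 0; 2; 0; 0; 2; 0; 2; 0; 0; 0; 0; 0; 0; 2; 0; 0; 0; 0; 0; 2; 0; 0; 0; 0; 0; 0];
  [:: 0; 0; 2; 0; 0; 0; 0; 0];
  [:: 0; 1; 0; 0; 0; 2; 0; 1; 2; 0; 2; 0; 0; 0; 0; 0; 0; 2; 0; 0; 0; 0; 0; 0];
  [:: 0; 0; 0; 0; 2; 0; 2; 0; 0; 0; 0];
  [:: 0; 0; 0; 0; 1; 0; 0; 0; 0];
  [:: 0; 1; 0; 0; 0; 2; 0; 1; 0; 2; 0; 0; 0; 0; 0; 0];
  [:: 0; 1; 0; 0; 0; 2; 0; 2; 0; 1; 2; 0; 0; 0; 0; 0; 2; 0; 0; 0; 0; 0; 0];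
  [:: 0; 1; 0; 2; 0; 0; 0; 0; 0; 0; 1; 0; 0; 0; 0; 0; 0];
  [:: 0; 2; 0; 0; 2; 0; 0; 2; 1; 0; 0; 0; 0; 0; 0; 2; 0; 0; 0; 0; 0; 0];
  [:: 0; 2; 0; 0; 2; 0; 1; 0; 0; 0; 0; 0; 0; 2; 0; 0; 0; 0; 0; 2; 0; 0; 0; 0; 0; 0]].
Definition transversal2 : seq (seq nat) :=
  [:: [::];
  [:: 0; 2; 0; 2; 0; 0; 0; 0; 2; 0; 0; 0; 0; 0; 2; 0; 1; 2; 0; 0; 0; 0; 0];
  [:: 0; 1; 0; 0; 2; 0; 0; 0; 0; 0; 1; 0; 0; 0; 0; 0; 0];
  [:: 0; 1; 0; 2; 0; 0; 0; 0; 0; 0; 1; 0; 0; 0; 2; 0; 2; 0; 0; 0; 0];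
  [:: 0; 1; 2; 0; 2; 1; 0; 0; 0; 0; 0; 0; 2; 0; 0; 0; 1; 0; 0; 0];
  [:: 2];
  [:: 0; 0; 0; 0; 0; 1; 0; 0; 0; 0; 1; 0; 0; 0; 0; 0; 0];
  [:: 1];
  [:: 1; 0; 0; 0; 0; 1; 0; 0; 0; 0; 0; 2; 0; 0; 0; 0; 2; 0; 1; 0; 0; 0; 0; 0; 0];
  [:: 0; 0; 1; 0; 2; 0; 1; 0; 0; 0; 0; 0; 0; 2; 0; 0; 0; 1; 0; 0; 0; 0];
  [:: 0; 1; 0; 2; 0; 2; 0; 0; 0; 0; 1; 0; 0; 0; 0];
  [:: 1; 0; 0; 0; 1; 0; 0; 0; 2; 0; 1; 0; 0; 0; 0; 2; 0; 0; 0; 0; 0];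
  [:: 0; 1; 0; 0; 0; 2; 0; 1; 0; 2; 0; 0; 0; 2; 0; 2; 1; 0; 0; 0];
  [:: 0; 1; 0; 0; 0; 2; 0; 0; 0; 0; 2; 0; 0; 0; 0; 0; 0; 1; 0; 0; 0];
  [:: 0; 1; 2; 0; 2; 1; 2; 0; 0; 0; 0; 2; 1; 0; 0; 0; 0];
  [:: 0; 0; 0; 1; 0; 0; 0; 0; 1; 2; 0; 2; 1; 0; 0; 0; 0; 0; 0];
  [:: 0; 1; 2; 0; 2; 1; 2; 0; 2; 0; 2; 0; 0; 0; 0; 2; 0; 2; 0; 0; 0; 0; 0];
  [:: 0; 0; 2; 0; 0; 0; 1; 0; 0; 0; 0; 0; 0; 2; 0; 0; 0; 0; 1; 0; 0; 0; 0];
  [:: 1; 0; 0; 0; 0; 1; 0; 0; 0; 0; 0; 0; 2; 0; 0; 2; 0; 0; 0; 2; 0; 0; 0; 0; 0; 0];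
  [:: 0; 2; 0; 2; 0; 2; 0; 0; 0; 0; 2; 0; 0; 1; 0; 0; 0]].
Definition stabilizer012 : seq (seq nat) :=
  [:: [::];
  [:: 0; 2; 0; 1; 0; 2; 0; 0; 0; 1; 0; 0; 0; 0; 1];
  [:: 0; 0; 2; 0; 0; 0; 0; 0; 0; 2; 0; 1; 0; 2; 0; 0; 1; 0; 0; 0];
  [:: 0; 0; 0; 1; 2; 0; 2; 0; 0; 0; 0; 2; 0; 0; 0; 0; 1; 0; 0; 0; 0];
  [:: 2; 0; 2; 0; 0; 0; 0; 0; 2; 0; 0; 0; 0; 0; 0; 2; 0; 0; 0; 0; 0; 2];
  [:: 0; 0; 0; 0; 0; 1; 2; 0; 0; 0; 0; 2; 0; 0; 0; 0; 0; 0; 1; 0; 0; 0];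
  [:: 1; 0; 1; 0; 2; 0; 2; 0; 0; 0; 0; 1; 0; 0; 0; 0; 0; 1; 0; 0; 0; 1; 0; 0];
  [:: 0; 0; 0; 0; 1; 0; 0; 0; 0; 0; 0; 2; 0; 0; 2; 0; 0; 0; 2; 0; 0; 0; 0; 0; 0; 2];
  [:: 0; 2; 0; 2; 0; 0; 0; 0; 0; 0; 2; 1; 0; 0; 0; 0; 0; 0; 2; 0; 0; 1; 0; 0; 0; 1];
  [:: 1; 2; 0; 0; 0; 1; 0; 0; 0; 2; 0; 0; 0; 0; 0; 0; 2; 0; 0; 0; 0; 0; 0; 1; 0; 0; 0; 0; 0; 0];
  [:: 1; 0; 1; 2; 0; 2; 0; 2; 0; 0; 0; 0; 0; 0; 1; 0; 0; 0; 2; 0; 0; 0; 2; 0; 0; 1; 0; 0; 0; 1];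
  [:: 1; 0; 1; 2; 0; 2; 0; 1; 2; 0; 0; 0; 0; 0; 0; 2; 0; 0; 0; 0; 0; 0; 2; 1; 0; 0; 0; 1; 0; 0; 0; 0];
  [:: 0; 1; 0; 2; 0; 2; 0; 1; 2; 0; 2; 1; 0; 0; 0; 1; 0; 2; 0; 0; 0; 2; 0; 0; 0; 0; 1; 0; 0; 0; 0; 0; 0];
  [:: 2; 0; 0; 1; 0; 2; 0; 1; 0; 0; 0; 0; 0; 0; 2; 0; 0; 0; 0; 0; 0; 2; 0; 1; 0; 0; 0; 0; 2; 0; 0; 0; 0; 0];
  [:: 0; 2; 0; 0; 0; 2; 0; 0; 0; 2; 0; 0; 0; 0; 0; 0; 1; 0; 0; 0; 0; 0; 0; 2; 0; 0; 0; 0; 0; 0; 1; 0; 0; 0; 0; 0];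
  [:: 0; 2; 0; 0; 0; 0; 0; 2; 0; 0; 0; 0; 0; 0; 2; 0; 0; 0; 0; 0; 0; 1; 0; 0; 2; 0; 0; 0; 0; 0; 1; 0; 0; 0; 0; 0; 0];
  [:: 1; 0; 0; 2; 0; 0; 0; 1; 0; 0; 0; 0; 0; 0; 2; 0; 0; 0; 0; 1; 0; 1; 0; 2; 0; 0; 0; 2; 0; 0; 0; 0; 1; 0; 0; 0; 0; 0; 0];
  [:: 1; 0; 1; 2; 0; 2; 1; 0; 0; 2; 0; 1; 2; 0; 2; 0; 0; 0; 0; 2; 1; 0; 0; 0; 0; 0; 0; 2; 0; 0; 0; 2; 0; 0; 1; 0; 0; 0; 1];
  [:: 2; 0; 2; 0; 1; 0; 2; 0; 0; 0; 1; 0; 0; 0; 0; 0; 0; 2; 0; 0; 0; 1; 0; 0; 0; 0; 0; 0; 2; 0; 0; 0; 0; 1; 0; 0; 0; 0; 1];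
  [:: 0; 1; 0; 1; 0; 0; 0; 0; 0; 0; 1; 0; 0; 0; 0; 1; 0; 0; 1; 2; 0; 0; 0; 2; 1; 2; 0; 0; 0; 0; 0; 0; 2; 1; 0; 0; 0; 0; 0; 0];
  [:: 2; 0; 2; 0; 0; 0; 2; 0; 0; 0; 2; 0; 0; 0; 0; 0; 2; 0; 0; 0; 1; 0; 1; 0; 2; 0; 0; 0; 2; 0; 0; 0; 0; 1; 0; 0; 0; 0; 0; 0];
  [:: 1; 0; 2; 0; 0; 0; 0; 0; 2; 0; 0; 0; 0; 0; 0; 2; 0; 0; 1; 0; 0; 0; 0; 2; 0; 1; 2; 0; 0; 0; 0; 0; 0; 2; 1; 0; 0; 0; 0; 0; 0];
  [:: 0; 1; 0; 0; 2; 0; 2; 0; 1; 0; 2; 0; 0; 0; 2; 0; 2; 1; 0; 0; 0; 0; 0; 0; 1; 0; 0; 0; 2; 0; 1; 0; 0; 0; 0; 2; 0; 0; 0; 0; 0];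
  [:: 1; 0; 1; 2; 0; 2; 1; 2; 0; 2; 0; 2; 0; 0; 0; 0; 2; 0; 2; 0; 1; 2; 0; 0; 0; 2; 1; 2; 0; 0; 0; 0; 0; 0; 2; 1; 0; 0; 0; 0; 0; 0];
  [:: 1; 0; 2; 0; 0; 0; 2; 0; 0; 0; 2; 0; 0; 0; 0; 0; 2; 0; 0; 0; 1; 0; 0; 0; 0; 0; 1; 0; 0; 2; 0; 0; 0; 0; 0; 1; 0; 0; 0; 0; 0; 0];
  [:: 0; 1; 2; 0; 2; 1; 0; 0; 0; 0; 0; 0; 1; 2; 0; 0; 0; 0; 1; 0; 1; 0; 0; 0; 0; 2; 0; 1; 2; 0; 0; 0; 0; 0; 0; 2; 1; 0; 0; 0; 0; 0; 0];
  [:: 0; 1; 2; 0; 2; 1; 0; 1; 0; 0; 0; 0; 0; 2; 0; 0; 0; 0; 1; 0; 1; 0; 0; 0; 0; 2; 0; 1; 2; 0; 0; 0; 0; 0; 0; 2; 1; 0; 0; 0; 0; 0; 0];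
  [:: 1; 0; 2; 0; 2; 0; 2; 0; 0; 0; 0; 2; 0; 0; 1; 0; 0; 0; 0; 0; 0; 1; 2; 0; 0; 0; 2; 1; 2; 0; 0; 0; 0; 0; 0; 2; 1; 0; 0; 0; 0; 0; 0];
  [:: 0; 2; 0; 0; 0; 0; 2; 0; 0; 0; 0; 0; 2; 0; 0; 0; 0; 0; 0; 2; 0; 0; 0; 2; 0; 0; 0; 0; 0; 0; 2; 0; 0; 0; 0; 0; 0; 2; 0; 0; 0; 0; 0; 0];
  [:: 0; 1; 0; 2; 0; 0; 0; 0; 0; 0; 1; 2; 0; 1; 0; 2; 0; 2; 0; 1; 0; 0; 0; 2; 0; 0; 0; 0; 0; 0; 2; 0; 0; 0; 0; 0; 0; 1; 0; 0; 0; 0; 0; 0];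
  [:: 1; 0; 1; 0; 0; 0; 0; 0; 0; 2; 0; 2; 0; 1; 0; 0; 1; 0; 0; 1; 0; 0; 0; 2; 0; 0; 0; 0; 0; 0; 2; 0; 0; 0; 0; 0; 0; 1; 0; 0; 0; 0; 0; 0];
  [:: 0; 1; 2; 0; 2; 0; 2; 0; 0; 0; 0; 0; 0; 1; 0; 0; 0; 0; 1; 0; 0; 0; 1; 0; 0; 0; 0; 2; 0; 1; 2; 0; 0; 0; 0; 0; 0; 2; 1; 0; 0; 0; 0; 0; 0];
  [:: 2; 0; 0; 0; 1; 2; 0; 2; 0; 0; 0; 0; 2; 0; 0; 0; 0; 1; 2; 0; 0; 0; 0; 0; 0; 2; 0; 0; 0; 0; 1; 0; 2; 0; 0; 0; 0; 0; 0; 1; 0; 0; 0; 0; 0; 0];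
  [:: 1; 0; 0; 1; 0; 2; 0; 1; 0; 0; 0; 0; 0; 0; 2; 0; 0; 0; 1; 0; 0; 0; 0; 0; 0; 2; 0; 0; 0; 1; 0; 0; 0; 0; 0; 0; 2; 0; 0; 0; 0; 1; 0; 0; 0; 0; 1];
  [:: 0; 0; 0; 1; 0; 0; 0; 2; 0; 1; 0; 0; 0; 0; 2; 0; 0; 1; 0; 0; 0; 0; 0; 2; 0; 0; 0; 2; 0; 0; 0; 0; 0; 0; 2; 0; 0; 0; 0; 0; 0; 2; 0; 0; 0; 0; 0; 0];
  [:: 0; 0; 0; 0; 0; 1; 0; 0; 0; 0; 2; 0; 2; 1; 2; 0; 2; 0; 2; 0; 0; 0; 0; 2; 0; 2; 0; 0; 0; 0; 0; 0; 1; 0; 0; 2; 0; 0; 0; 0; 0; 1; 0; 0; 0; 0; 0; 0];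
  [:: 0; 0; 2; 0; 0; 0; 0; 0; 0; 2; 0; 0; 2; 0; 0; 2; 1; 0; 0; 0; 2; 0; 0; 0; 0; 0; 0; 1; 2; 0; 0; 0; 2; 1; 2; 0; 0; 0; 0; 0; 0; 2; 1; 0; 0; 0; 0; 0; 0];
  [:: 1; 0; 2; 0; 0; 0; 0; 2; 0; 0; 0; 0; 0; 2; 0; 1; 0; 0; 0; 0; 0; 0; 1; 0; 0; 0; 0; 2; 0; 1; 0; 0; 0; 0; 0; 0; 2; 0; 0; 0; 0; 0; 0; 1; 0; 0; 0; 0; 0];
  [:: 0; 1; 2; 0; 2; 0; 0; 0; 0; 0; 0; 2; 0; 0; 0; 2; 0; 0; 0; 1; 0; 0; 0; 0; 0; 2; 0; 0; 0; 2; 0; 0; 0; 0; 0; 0; 2; 0; 0; 0; 0; 0; 0; 2; 0; 0; 0; 0; 0; 0];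
  [:: 1; 0; 1; 0; 2; 0; 0; 0; 0; 0; 0; 1; 0; 0; 0; 2; 0; 2; 0; 1; 0; 0; 0; 0; 0; 2; 0; 0; 0; 2; 0; 0; 0; 0; 0; 0; 2; 0; 0; 0; 0; 0; 0; 2; 0; 0; 0; 0; 0; 0];
  [:: 0; 1; 0; 2; 0; 2; 0; 0; 0; 0; 1; 0; 1; 0; 0; 0; 0; 0; 0; 2; 0; 0; 2; 0; 0; 0; 2; 0; 0; 1; 2; 0; 0; 0; 2; 1; 2; 0; 0; 0; 0; 0; 0; 2; 1; 0; 0; 0; 0; 0; 0];
  [:: 0; 2; 0; 1; 0; 2; 0; 0; 0; 1; 0; 0; 0; 0; 1; 0; 0; 0; 1; 2; 0; 2; 0; 0; 0; 0; 2; 0; 0; 0; 0; 1; 0; 0; 0; 0];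
  [:: 0; 2; 0; 1; 0; 2; 0; 0; 0; 1; 0; 0; 0; 0; 0; 0; 2; 0; 0; 0; 1; 0; 0; 0; 0; 0; 0; 2; 0; 0; 0; 0; 1; 0; 1; 0; 2; 0; 0; 0; 2; 0; 0; 0; 0; 1; 0; 0; 0; 0; 0; 0];
  [:: 0; 2; 0; 1; 0; 2; 0; 0; 0; 1; 0; 0; 0; 0; 0; 1; 2; 0; 2; 1; 2; 0; 2; 0; 2; 0; 0; 0; 0; 2; 0; 2; 0; 1; 2; 0; 0; 0; 2; 1; 2; 0; 0; 0; 0; 0; 0; 2; 1; 0; 0; 0; 0; 0; 0];
  [:: 0; 2; 0; 1; 0; 2; 0; 0; 0; 1; 0; 0; 0; 0; 0; 2; 0; 0; 0; 2; 0; 0; 0; 2; 0; 0; 0; 0; 0; 2; 0; 0; 0; 1; 0; 0; 0; 0; 0; 1; 0; 0; 2; 0; 0; 0; 0; 0; 1; 0; 0; 0; 0; 0; 0];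
  [:: 0; 2; 0; 1; 0; 2; 0; 0; 0; 1; 0; 0; 0; 0; 1; 0; 1; 2; 0; 2; 1; 0; 0; 0; 0; 0; 0; 1; 2; 0; 0; 0; 0; 1; 0; 1; 0; 0; 0; 0; 2; 0; 1; 2; 0; 0; 0; 0; 0; 0; 2; 1; 0; 0; 0; 0; 0; 0];
  [:: 0; 2; 0; 1; 0; 2; 0; 0; 0; 1; 0; 0; 0; 0; 1; 0; 1; 0; 2; 0; 2; 0; 0; 0; 0; 1; 0; 1; 0; 0; 0; 0; 0; 0; 2; 0; 0; 2; 0; 0; 0; 2; 0; 0; 1; 2; 0; 0; 0; 2; 1; 2; 0; 0; 0; 0; 0; 0; 2; 1; 0; 0; 0; 0; 0; 0];
  [:: 0; 0; 0; 1; 2; 0; 2; 0; 0; 0; 0; 2; 0; 0; 0; 0; 1; 0; 0; 0; 0; 2; 0; 2; 0; 0; 0; 0; 0; 2; 0; 0; 0; 0; 0; 0; 2; 0; 0; 0; 0; 0; 2]].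

Definition perm_family (ws : seq (seq nat)) (i : 'I_(size ws)) : {perm 'I_22} :=
  word_perm (nth [::] ws i).
Arguments perm_family : clear implicits.

Definition fixes_points (ws : seq (seq nat)) (m : nat) : bool :=
  all (fun w => all (fun k => act_word w k == k) (iota 0 m)) ws.

Definition separates_point (ws : seq (seq nat)) (m : nat) : bool :=
  uniq (map (fun w => act_word w m) ws).

Definition distinct_perms (ws : seq (seq nat)) : bool :=
  uniq (map (fun w => map (act_word w) (iota 0 22)) ws).

Lemma perm_family_fix ws m :
  fixes_points ws m -> forall i (k : 'I_22), k < m -> perm_family ws i k = k.
Proof.
move=> /allP fix_ws i k lt_km; apply: val_inj; rewrite word_permE.
by apply/eqP; move/allP: (fix_ws _ (mem_nth [::] (ltn_ord i))); apply; rewrite mem_iota.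
Qed.

Lemma perm_family_sep ws (k : 'I_22) :
  separates_point ws k -> injective (fun i => perm_family ws i k).
Proof.
move=> sep_ws; apply: (@inj_compr _ _ _ val).
by apply: (eq_inj (uniq_map_nth_inj (x0 := [::]) sep_ws)) => i /=; rewrite word_permE.
Qed.

Lemma perm_family_inj ws : distinct_perms ws -> injective (perm_family ws).
Proof.
move=> dist_ws.
apply: (@inj_compr _ _ _ (fun p : {perm 'I_22} => map (fun k => val (p k)) (enum 'I_22))).
apply: (eq_inj (uniq_map_nth_inj (x0 := [::]) dist_ws)) => i.
by rewrite -val_enum_ord -map_comp; apply: eq_map => k /=; rewrite word_permE.
Qed.

Definition chain_index : finType :=
  ('I_(size stabilizer012) * 'I_(size transversal2) * 'I_(size transversal1)
    * 'I_(size transversal0))%type.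

Definition chain_elt (G : group) (gen : nat -> G) : chain_index -> G :=
  gmul_fam (gmul_fam (gmul_fam (word_family gen stabilizer012) (word_family gen transversal2))
                     (word_family gen transversal1))
           (word_family gen transversal0).

Lemma card_chain_index : #|chain_index| = 443520.
Proof. by rewrite !card_prod !card_ord; apply/eqP; vm_compute. Qed.

Lemma hom_chain_elt (G H : group) (f : G -> H) (genG : nat -> G) (genH : nat -> H) :
  is_hom f -> (forall g, f (genG g) = genH g) -> f \o chain_elt genG =1 chain_elt genH.
Proof.
move=> fM fgen [[[d c] b] a].
by rewrite /chain_elt /gmul_fam /word_family /= !fM !(hom_word_eval fM fgen).
Qed.

Lemma chain_perm_inj : injective (chain_elt (G := perm_group _) gen_perm).
Proof.
have fix3 : forall d (k : 'I_22), k < 3 -> perm_family stabilizer012 d k = k.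
  by apply: perm_family_fix; vm_compute.
have fix2 : forall c (k : 'I_22), k < 2 -> perm_family transversal2 c k = k.
  by apply: perm_family_fix; vm_compute.
have fix1 : forall b (k : 'I_22), k < 1 -> perm_family transversal1 b k = k.
  by apply: perm_family_fix; vm_compute.
apply: (mul_stab_transversal_inj (k := Ordinal (isT : 0 < 22))).
- apply: (mul_stab_transversal_inj (k := Ordinal (isT : 1 < 22))).
  + apply: (mul_stab_transversal_inj (k := Ordinal (isT : 2 < 22))).
    * by apply: perm_family_inj; vm_compute.
    * by move=> d; rewrite fix3.
    * by apply: perm_family_sep; vm_compute.
  + by apply: gmul_fam_fix => i; rewrite (fix3, fix2).
  + by apply: perm_family_sep; vm_compute.
- by apply: gmul_fam_fix => i; [apply: gmul_fam_fix => j; rewrite (fix3, fix2) | rewrite fix1].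
- by apply: perm_family_sep; vm_compute.
Qed.

Theorem corollary2p2 (G : group) (x y t : G) :
  is_presented x y t ->
  exists f : 'I_443520 -> G, injective f.
Proof.
case=> _ universal.
have [f [fM fx fy ft _]] := universal _ _ _ _ gen_perm_rels.
pose gen (g : nat) : G := match g with 0 => x | 1 => y | _ => t end.
have f_gen g : f (gen g) = gen_perm g by case: g => [|[|g]] /=; rewrite ?fx ?fy ?ft.
apply: (injective_ord_of_card card_chain_index (F := chain_elt gen)).
exact: inj_compr (eq_inj chain_perm_inj (fun i => esym (hom_chain_elt fM f_gen i))).
Qed.
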